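(* Let $n,m\in\mathbb{N}$ and $\varrho:\mathbb{C}\to\mathbb{C}$. Then $\mathcal{SN}^\varrho_{n,m}\subseteq\mathcal{I}^\varrho_{n,m,n+m+1}$.
   Context: $\mathcal{SN}^\varrho_{n,m}$ denotes the set of shallow complex-valued neural networks, i.e. functions $V_2\circ\varrho^{\times N}\circ V_1:\mathbb{C}^n\to\mathbb{C}^m$ with arbitrary $N\in\mathbb{N}$, $\mathbb{C}$-affine maps $V_1:\mathbb{C}^n\to\mathbb{C}^N$, $V_2:\mathbb{C}^N\to\mathbb{C}^m$ (maps $z\mapsto Az+b$ with complex $A,b$), and $\varrho^{\times N}$ the componentwise application of $\varrho$. $\mathcal{I}^\varrho_{n,m,n+m+1}$ denotes the set of register models, i.e. functions $T_L\circ\tilde\varrho\circ T_{L-1}\circ\cdots\circ\tilde\varrho\circ T_1$ with arbitrary $L\ge2$, $\mathbb{C}$-affine $T_1:\mathbb{C}^n\to\mathbb{C}^{n+m+1}$, $T_L:\mathbb{C}^{n+m+1}\to\mathbb{C}^m$, $T_\ell:\mathbb{C}^{n+m+1}\to\mathbb{C}^{n+m+1}$ for $2\le\ell\le L-1$, where $\tilde\varrho:\mathbb{C}^{n+m+1}\to\mathbb{C}^{n+m+1}$ applies $\varrho$ to exactly one fixed coordinate (the $(n+1)$-th) and the identity to all other coordinates. *)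

From mathcomp Require Import all_boot all_order all_algebra.
From mathcomp Require Import complex.
From mathcomp Require Import Rstruct.
From Stdlib Require Import Reals.
Set Implicit Arguments. Unset Strict Implicit. Unset Printing Implicit Defensive.
Import GRing.Theory Num.Theory.
Local Open Scope ring_scope.

Definition CC : Type := complex Rdefinitions.R.

Definition is_affine (p q : nat) (T : 'cV[CC]_p -> 'cV[CC]_q) : Prop :=
  exists (A : 'M[CC]_(q, p)) (b : 'cV[CC]_q), T = (fun z => A *m z + b).

Definition rho_cw (rho : CC -> CC) (N : nat) (v : 'cV[CC]_N) : 'cV[CC]_N :=
  map_mx rho v.

Definition SN (rho : CC -> CC) (n m : nat) (f : 'cV[CC]_n -> 'cV[CC]_m) : Prop :=
  exists (N : nat) (V1 : 'cV[CC]_n -> 'cV[CC]_N) (V2 : 'cV[CC]_N -> 'cV[CC]_m),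
    is_affine V1 /\ is_affine V2 /\ f = (fun z => V2 (rho_cw rho (V1 z))).

(* tilde rho : applies rho to the (k+1)-th coordinate (0-based index k)
   and the identity to all other coordinates. *)
Definition rho_at (rho : CC -> CC) (d k : nat) (v : 'cV[CC]_d) : 'cV[CC]_d :=
  \col_i (if (i : nat) == k then rho (v i ord0) else v i ord0).

(* Register models I^rho_{n,m,n+m+1}:
   T_L o rt o T_{L-1} o ... o rt o T_1 with L >= 2, where rt = rho_at rho d n,
   d = n+m+1.  The middle maps T_2, ..., T_{L-1} are given by the list [mid]
   (of length L-2, so L = size mid + 2 >= 2 is arbitrary). *)
Definition register_model (rho : CC -> CC) (n m : nat)
    (T1 : 'cV[CC]_n -> 'cV[CC]_(n + m + 1))
    (mid : seq ('cV[CC]_(n + m + 1) -> 'cV[CC]_(n + m + 1)))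
    (TL : 'cV[CC]_(n + m + 1) -> 'cV[CC]_m) : 'cV[CC]_n -> 'cV[CC]_m :=
  fun z => TL (foldl (fun v T => rho_at rho n (T v))
                     (rho_at rho n (T1 z)) mid).

Definition Reg (rho : CC -> CC) (n m : nat) (f : 'cV[CC]_n -> 'cV[CC]_m) : Prop :=
  exists (T1 : 'cV[CC]_n -> 'cV[CC]_(n + m + 1))
         (mid : seq ('cV[CC]_(n + m + 1) -> 'cV[CC]_(n + m + 1)))
         (TL : 'cV[CC]_(n + m + 1) -> 'cV[CC]_m),
    is_affine T1 /\ (forall T, List.In T mid -> is_affine T) /\ is_affine TL /\
    f = register_model rho T1 mid TL.

From HB Require Import structures.
From mathcomp Require Import all_boot all_order all_algebra.
From mathcomp Require Import complex Rstruct zify.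
From Stdlib Require Import FunctionalExtensionality.
Set Implicit Arguments. Unset Strict Implicit. Unset Printing Implicit Defensive.
Import GRing.Theory Num.Theory.
Local Open Scope ring_scope.

(* A shallow network z |-> A2 rho(A1 z + b1) + b2 with N hidden neurons is
   simulated by a register model on C^(n+m+1) whose state is laid out as
     [ input x (coordinates 0..n-1) | slot s (coordinate n) | accumulator a ],
   the slot being the single coordinate on which rho acts.  The first layer
   writes (z, (A1 z + b1)_0, 0); the k-th hidden layer keeps z, adds the
   activated slot times the (k-1)-th column of A2 to the accumulator and
   writes the k-th preactivation into the slot; the last layer flushes the
   slot into the accumulator and adds b2. *)

(* The k-th coordinate of a column vector, read as 0 beyond its size; this
   lets the register layout be described by arithmetic on indices. *)
Definition coord (p : nat) (u : 'cV[CC]_p) (k : nat) : CC :=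
  if insub k is Some j then u j ord0 else 0.

Lemma coordE (p : nat) (u : 'cV[CC]_p) (j : 'I_p) : coord u j = u j ord0.
Proof. by rewrite /coord valK. Qed.

Lemma coord_lt (p : nat) (u : 'cV[CC]_p) (k : nat) (lt_kp : (k < p)%N) :
  coord u k = u (Ordinal lt_kp) ord0.
Proof. by rewrite /coord insubT. Qed.

Lemma coord_out (p : nat) (u : 'cV[CC]_p) (k : nat) : (p <= k)%N -> coord u k = 0.
Proof. by move=> le_pk; rewrite /coord insubF // ltnNge le_pk. Qed.

Lemma coordP (p : nat) (a : CC) (u v : 'cV[CC]_p) (k : nat) :
  coord (a *: u + v) k = a * coord u k + coord v k.
Proof. by rewrite /coord; case: (insub k) => [j|]; rewrite ?mxE // mulr0 addr0. Qed.

Lemma coordD (p : nat) (u v : 'cV[CC]_p) (k : nat) :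
  coord (u + v) k = coord u k + coord v k.
Proof. by have := coordP 1 u v k; rewrite scale1r mul1r. Qed.

(* A linear map followed by a translation is affine: its matrix has as
   j-th column the image of the j-th unit vector. *)
Lemma affine_linear_shift (p q : nat) (T L : 'cV[CC]_p -> 'cV[CC]_q) (b : 'cV[CC]_q) :
  linear L -> (forall z, T z = L z + b) -> is_affine T.
Proof.
move=> linL TE; pose L' : {linear 'cV[CC]_p -> 'cV[CC]_q} :=
  HB.pack L (GRing.isLinear.Build _ _ _ _ L linL).
exists (\matrix_(i, j) L (delta_mx j ord0) i ord0), b.
apply: functional_extensionality => z; rewrite TE; congr (_ + _).
change L with (L' : _ -> _).
rewrite [in LHS](matrix_sum_delta z) linear_sum.
apply/matrixP=> i k; rewrite ord1 !mxE summxE.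
by apply: eq_bigr => j _; rewrite big_ord1 linearZ !mxE mulrC.
Qed.

Section RegisterLayout.

Variables n m : nat.
Local Notation state := 'cV[CC]_(n + m + 1).

Definition regvec (x : 'cV[CC]_n) (s : CC) (a : 'cV[CC]_m) : state :=
  \col_i (if ((i : nat) < n)%N then coord x i
          else if (i : nat) == n then s else coord a (i - n.+1)).

Definition reg_input (v : state) : 'cV[CC]_n := \col_j coord v j.
Definition reg_slot (v : state) : CC := coord v n.
Definition reg_acc (v : state) : 'cV[CC]_m := \col_j coord v (n.+1 + j).

Lemma reg_inputE x s a : reg_input (regvec x s a) = x.
Proof.
apply/matrixP=> j k; rewrite ord1 mxE.
have lt_j : (j < n + m + 1)%N by rewrite -addnA ltn_addr.
by rewrite (coord_lt _ lt_j) mxE /= ltn_ord coordE.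
Qed.

Lemma reg_slotE x s a : reg_slot (regvec x s a) = s.
Proof.
have lt_n : (n < n + m + 1)%N by lia.
by rewrite /reg_slot (coord_lt _ lt_n) mxE /= ltnn eqxx.
Qed.

Lemma reg_accE x s a : reg_acc (regvec x s a) = a.
Proof.
apply/matrixP=> j k; rewrite ord1 mxE.
have lt_j : (n.+1 + j < n + m + 1)%N by have := ltn_ord j; lia.
rewrite (coord_lt _ lt_j) mxE /=.
have -> : (n.+1 + j < n)%N = false by lia.
have -> : (n.+1 + j == n) = false by lia.
by rewrite addKn coordE.
Qed.

Lemma rho_at_regvec (rho : CC -> CC) x s a :
  rho_at rho n (regvec x s a) = regvec x (rho s) a.
Proof. by apply/matrixP=> i j; rewrite !mxE; case: ltngtP. Qed.

Lemma regvecP (c : CC) x x' s s' a a' :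
  regvec (c *: x + x') (c * s + s') (c *: a + a') = c *: regvec x s a + regvec x' s' a'.
Proof.
apply/matrixP=> i j; rewrite !mxE.
by case: ifP => _; last case: ifP => _; rewrite ?coordP.
Qed.

Lemma regvecD x x' s s' a a' :
  regvec (x + x') (s + s') (a + a') = regvec x s a + regvec x' s' a'.
Proof. by have := regvecP 1 x x' s s' a a'; rewrite !scale1r mul1r. Qed.

Lemma reg_input_linear : linear reg_input.
Proof. by move=> c u v; apply/matrixP=> i j; rewrite !mxE coordP. Qed.

Lemma reg_acc_linear : linear reg_acc.
Proof. by move=> c u v; apply/matrixP=> i j; rewrite !mxE coordP. Qed.

Lemma reg_slotP (c : CC) (u v : state) :
  reg_slot (c *: u + v) = c * reg_slot u + reg_slot v.
Proof. exact: coordP. Qed.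

Lemma acc_update_linear (w : 'cV[CC]_m) :
  linear (fun v => reg_acc v + reg_slot v *: w).
Proof.
move=> c u v; rewrite reg_acc_linear reg_slotP.
by rewrite scalerDl scalerDr !scalerA addrACA.
Qed.

End RegisterLayout.

Section Simulation.

Variables (rho : CC -> CC) (N n m : nat).
Variables (A1 : 'M[CC]_(N, n)) (b1 : 'cV[CC]_N) (A2 : 'M[CC]_(m, N)) (b2 : 'cV[CC]_m).
Local Notation state := 'cV[CC]_(n + m + 1).

(* Preactivation of neuron k and its outgoing weights (column k of A2,
   zero for k >= N). *)
Definition preact (k : nat) (z : 'cV[CC]_n) : CC := coord (A1 *m z + b1) k.
Definition outw (k : nat) : 'cV[CC]_m := \col_i coord (row i A2)^T k.

Definition acc (k : nat) (z : 'cV[CC]_n) : 'cV[CC]_m :=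
  \sum_(i < k) rho (preact i z) *: outw i.

Definition first_layer (z : 'cV[CC]_n) : state := regvec z (preact 0 z) 0.

Definition hidden_layer (k : nat) (v : state) : state :=
  regvec (reg_input v) (preact k (reg_input v))
         (reg_acc v + reg_slot v *: outw k.-1).

Definition hidden_layers : seq (state -> state) := map hidden_layer (iota 1 N.-1).

Definition last_layer (v : state) : 'cV[CC]_m :=
  reg_acc v + reg_slot v *: outw N.-1 + b2.

Lemma preactE (k : nat) (z : 'cV[CC]_n) :
  preact k z = coord (A1 *m z) k + coord b1 k.
Proof. exact: coordD. Qed.

Lemma preact_linear_part (k : nat) (c : CC) (u v : 'cV[CC]_n) :
  coord (A1 *m (c *: u + v)) k = c * coord (A1 *m u) k + coord (A1 *m v) k.
Proof. by rewrite mulmxDr -scalemxAr coordP. Qed.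

Lemma outw_out (k : nat) : (N <= k)%N -> outw k = 0.
Proof. by move=> le_Nk; apply/matrixP=> i j; rewrite !mxE coord_out. Qed.

Lemma first_layer_affine : is_affine first_layer.
Proof.
apply: (affine_linear_shift (L := fun z => regvec z (coord (A1 *m z) 0) 0)
                            (b := regvec 0 (coord b1 0) 0)).
  by move=> c u v; rewrite preact_linear_part -regvecP scaler0 addr0.
by move=> z; rewrite /first_layer preactE -regvecD !addr0.
Qed.

Lemma hidden_layer_affine (k : nat) : is_affine (hidden_layer k).
Proof.
apply: (affine_linear_shift
  (L := fun v => regvec (reg_input v) (coord (A1 *m reg_input v) k)
                        (reg_acc v + reg_slot v *: outw k.-1))
  (b := regvec 0 (coord b1 k) 0)).
  move=> c u v.
  by rewrite reg_input_linear preact_linear_part acc_update_linear -regvecP.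
by move=> v; rewrite /hidden_layer preactE -regvecD !addr0.
Qed.

Lemma last_layer_affine : is_affine last_layer.
Proof.
apply: (affine_linear_shift (L := fun v => reg_acc v + reg_slot v *: outw N.-1)
                            (b := b2)) => //.
exact: acc_update_linear.
Qed.

Lemma run_hidden_layers (z : 'cV[CC]_n) (k : nat) :
  foldl (fun v T => rho_at rho n (T v)) (rho_at rho n (first_layer z))
        (map hidden_layer (iota 1 k)) =
  regvec z (rho (preact k z)) (acc k z).
Proof.
elim: k => [|k IH]; first by rewrite /= rho_at_regvec /acc big_ord0.
have -> : iota 1 k.+1 = iota 1 k ++ [:: k.+1].
  by rewrite -[k.+1]addn1 iotaD add1n addn1.
rewrite map_cat foldl_cat {}IH /= /hidden_layer reg_inputE reg_accE reg_slotE.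
by rewrite rho_at_regvec /acc big_ord_recr.
Qed.

Lemma acc_all (z : 'cV[CC]_n) : acc N z = A2 *m rho_cw rho (A1 *m z + b1).
Proof.
apply/matrixP=> i j; rewrite ord1 /acc summxE !mxE.
by apply: eq_bigr => k _; rewrite !mxE /preact !coordE !mxE mulrC.
Qed.

(* The last layer adds the contribution of neuron N-1; for N = 0 this is a
   zero column, so the result is the full sum in every case. *)
Lemma last_layer_output (z : 'cV[CC]_n) :
  last_layer (regvec z (rho (preact N.-1 z)) (acc N.-1 z)) =
  A2 *m rho_cw rho (A1 *m z + b1) + b2.
Proof.
rewrite /last_layer reg_accE reg_slotE -acc_all; congr (_ + _).
have -> : acc N.-1 z + rho (preact N.-1 z) *: outw N.-1 = acc N.-1.+1 z.
  by rewrite /acc big_ord_recr.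
have [N0|N_gt0] := posnP N; last by rewrite prednK.
by rewrite N0 /acc big_ord1 big_ord0 outw_out ?N0 // scaler0.
Qed.

End Simulation.

Theorem proposition3p4 (n m : nat) (rho : CC -> CC) :
  forall f : 'cV[CC]_n -> 'cV[CC]_m, SN rho f -> Reg rho f.
Proof.
move=> f [N [V1 [V2 [[A1 [b1 ->]] [[A2 [b2 ->]] ->]]]]].
exists (first_layer m A1 b1), (hidden_layers A1 b1 A2), (last_layer A2 b2).
split; first exact: first_layer_affine.
split; first by move=> T /List.in_map_iff [k [<- _]]; exact: hidden_layer_affine.
split; first exact: last_layer_affine.
apply: functional_extensionality => z.
by rewrite /register_model run_hidden_layers last_layer_output.
Qed.
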